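(* Let $\langle\cdot,\cdot\rangle$ be an invariant symmetric bilinear form on $\mathfrak g$, extended pointwise to $\mathfrak g$-valued functions and 1-forms on $\Sigma$. Let $\omega$ be a meromorphic $\mathfrak g$-valued 1-form on $\Sigma$, holomorphic outside $\Pi\cup\Gamma$, which at every $\gamma\in\Gamma$ has, in a local coordinate $z$ centered at $\gamma$, the expansion $\omega=\left(\frac{h_\gamma}{z}+\omega_0+\omega_1z+\dots\right)dz$ with all $\omega_l\in\mathfrak g_0$ (the degree $0$ subspace of the grading given by $h_\gamma$). Then for all $L,L'\in\mathcal L$ the meromorphic 1-form $\langle L,(d-\mathrm{ad}\,\omega)L'\rangle$ is holomorphic at every point of $\Gamma$ (hence holomorphic outside $\{P_1,\dots,P_N\}\cup\{Q_1,\dots,Q_M\}$).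
   Context: Let $\mathfrak g$ be a complex semisimple Lie algebra with Cartan subalgebra $\mathfrak h$. An element $h\in\mathfrak h$ with $\alpha_i(h)\in\mathbb Z_{\ge0}$ for all simple roots $\alpha_i$ defines a $\mathbb Z$-grading $\mathfrak g=\bigoplus_{p=-k}^k\mathfrak g_p$, $\mathfrak g_p=\{X\in\mathfrak g:(\mathrm{ad}\,h)X=pX\}$, $k=\max\{p:\mathfrak g_p\neq0\}$, and a filtration $\tilde{\mathfrak g}_p=\bigoplus_{q=-k}^{p}\mathfrak g_q$. Let $\Sigma$ be a compact Riemann surface of genus $g$ with disjoint finite sets $\Pi=\{P_1,\dots,P_N\}\cup\{Q_1,\dots,Q_M\}$ and $\Gamma$. For each $\gamma\in\Gamma$ fix such a grading element $h_\gamma$ (all of depth $k$). $\mathcal L$ is the space of meromorphic maps $L:\Sigma\to\mathfrak g$, holomorphic outside $\Pi\cup\Gamma$, such that at each $\gamma\in\Gamma$, in a local coordinate $z$ centered at $\gamma$, $L(z)=\sum_{p\ge -k}L_pz^p$ with $L_p\in\tilde{\mathfrak g}_p$ (for the grading given by $h_\gamma$). Here $(\mathrm{ad}\,\omega)L'$ denotes the 1-form $[\omega,L']$. *)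

From HB Require Import structures.
From mathcomp Require Import all_boot all_order all_algebra.
Set Implicit Arguments. Unset Strict Implicit. Unset Printing Implicit Defensive.
Import Order.TTheory GRing.Theory Num.Theory.
Local Open Scope ring_scope.

Section Lie.
Variables (F : fieldType) (d : nat).
Local Notation V := 'rV[F]_d.
Variable br : V -> V -> V.

Definition is_lie_bracket : Prop :=
  [/\ (forall a x y z, br (a *: x + y) z = a *: br x z + br y z),
      (forall a x y z, br z (a *: x + y) = a *: br z x + br z y),
      (forall x, br x x = 0) &
      (forall x y z, br x (br y z) + br y (br z x) + br z (br x y) = 0)].

(* subspaces of g are represented by (square) matrices, via their row space *)
Definition lie_ideal (I : 'M[F]_d) : Prop :=
  forall x y : V, (x <= I)%MS -> (br x y <= I)%MS.

Definition derived (I : 'M[F]_d) : 'M[F]_d :=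
  (\sum_(i < d) \sum_(j < d) <<br (row i I) (row j I)>>)%MS.

Definition solvable_sub (I : 'M[F]_d) : Prop :=
  exists m, iter m derived I = 0.

Definition semisimple_lie : Prop :=
  forall I : 'M[F]_d, lie_ideal I -> solvable_sub I -> I = 0.

Definition ad (x : V) : 'M[F]_d := lin1_mx (br x).

Definition lie_subalg (H : 'M[F]_d) : Prop :=
  forall x y : V, (x <= H)%MS -> (y <= H)%MS -> (br x y <= H)%MS.

Definition toral (H : 'M[F]_d) : Prop :=
  [/\ lie_subalg H,
      (forall x y : V, (x <= H)%MS -> (y <= H)%MS -> br x y = 0) &
      (forall x : V, (x <= H)%MS -> diagonalizable (ad x))].

Definition cartan_subalg (H : 'M[F]_d) : Prop :=
  toral H /\ (forall H' : 'M[F]_d, toral H' -> (H <= H')%MS -> (H' <= H)%MS).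

(* roots of (g, H): nonzero functionals on H having a nonzero root vector.
   A functional on H is represented by a function V -> F (values outside H
   are irrelevant). *)
Definition is_root (H : 'M[F]_d) (al : V -> F) : Prop :=
  (exists2 t : V, (t <= H)%MS & al t != 0) /\
  (exists2 x : V, x != 0 & forall t : V, (t <= H)%MS -> br t x = al t *: x).

Definition nthf (s : seq (V -> F)) (i : nat) : V -> F := nth (fun _ => 0) s i.

Definition is_base (H : 'M[F]_d) (D : seq (V -> F)) : Prop :=
  [/\ (forall i, (i < size D)%N -> is_root H (nthf D i)),
      (forall c : 'I_(size D) -> F,
          (forall t : V, (t <= H)%MS -> \sum_(i < size D) c i * nthf D i t = 0) ->
          forall i, c i = 0) &
      (forall be : V -> F, is_root H be ->
         exists m : 'I_(size D) -> nat,
           (forall t : V, (t <= H)%MS -> be t = \sum_(i < size D) (m i)%:R * nthf D i t) \/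
           (forall t : V, (t <= H)%MS -> be t = - \sum_(i < size D) (m i)%:R * nthf D i t))].

Definition grading_element (h : V) : Prop :=
  exists H : 'M[F]_d, [/\ cartan_subalg H, (h <= H)%MS &
    exists D : seq (V -> F), is_base H D /\
      forall i, (i < size D)%N -> exists m : nat, nthf D i h = m%:R].

Definition in_grade (h : V) (p : int) (x : V) : Prop := br h x = p%:~R *: x.

Definition is_depth (h : V) (k : nat) : Prop :=
  (exists2 x : V, x != 0 & in_grade h k%:Z x) /\
  (forall (p : int) (x : V), (k%:Z < p)%R -> in_grade h p x -> x = 0).

Definition in_filt (h : V) (p : int) (x : V) : Prop :=
  exists (s : seq int) (f : int -> V),
    [/\ all (fun q => (q <= p)%R) s, (forall q, in_grade h q (f q)) &
        x = \sum_(q <- s) f q].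

Definition inv_sym_bilinear (B : V -> V -> F) : Prop :=
  [/\ (forall a x y z, B (a *: x + y) z = a * B x z + B y z),
      (forall x y, B x y = B y x) &
      (forall x y z, B (br x y) z = B x (br y z))].

End Lie.

(* Cauchy product coefficient of two Laurent series (in a local coordinate z)
   whose coefficients vanish below lo1 and lo2 respectively:
   cprod lo1 lo2 f n = sum_{p + q = n} f p q. *)
Definition cprod (R : nmodType) (lo1 lo2 : int) (f : int -> int -> R) (n : int) : R :=
  if (lo1 + lo2 <= n)%R then
    \sum_(i < (absz (n - lo1 - lo2)%R).+1) f (lo1 + i%:Z)%R (n - lo1 - i%:Z)%R
  else 0.

(* Coefficient of z^n dz in the 1-form <L, (d - ad w) L'>, where
   L = sum_{p >= -k} L p z^p, L' = sum_{q >= -k} L' q z^q and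
   w = (sum_{s >= -1} w s z^s) dz. *)
Definition form_coef (F : fieldType) (d : nat) (br : 'rV[F]_d -> 'rV[F]_d -> 'rV[F]_d)
  (B : 'rV[F]_d -> 'rV[F]_d -> F) (k : nat) (L L' w : int -> 'rV[F]_d) (n : int) : F :=
  let kk := k%:Z in
  (* d L' = sum_m (m+1) L'_{m+1} z^m dz, vanishing for m < -k-1 *)
  let dL' := fun m : int => (m + 1)%:~R *: L' (m + 1)%R in
  (* [w, L'] = sum_m (sum_{s+q=m} [w_s, L'_q]) z^m dz *)
  let wL' := cprod (-1) (- kk) (fun s q => br (w s) (L' q)) in
  cprod (- kk) (- kk - 1) (fun p m => B (L p) (dL' m)) n
  - cprod (- kk) (- kk - 1) (fun p m => B (L p) (wL' m)) n.

(* Invariance of B makes homogeneous components orthogonal unless their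
   degrees add up to 0: for x in g_a and y in g_b,
   a B(x,y) = B([h,x],y) = -B(x,[h,y]) = -b B(x,y).
   In the coefficient of z^n dz (n < 0) of <L, (d - ad w) L'>, the term
   L_p with p + m = n pairs against the degree-m coefficients of dL' and of
   [w, L'].  The regular part w_s z^s (s >= 0) of w has degree 0, so
   [w_s, L'_(m-s)] has filtration level m - s < -p and pairs to zero with
   L_p; the residue h/z gives [h, L'_(m+1)], and since only the degree
   (m+1) component of L'_(m+1) can pair with L_p, [h, _] acts there as
   multiplication by m+1, which is exactly the coefficient of dL'. *)
From HB Require Import structures.
From mathcomp Require Import all_boot all_order all_algebra.
From mathcomp Require Import zify.
Import Order.TTheory GRing.Theory Num.Theory.
Set Implicit Arguments. Unset Strict Implicit. Unset Printing Implicit Defensive.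
Local Open Scope ring_scope.

Section LieBracket.
Variables (F : fieldType) (d : nat) (br : 'rV[F]_d -> 'rV[F]_d -> 'rV[F]_d).
Hypothesis Hlie : is_lie_bracket br.

Lemma brDl x y z : br (x + y) z = br x z + br y z.
Proof. by case: Hlie => linl _ _ _; have := linl 1 x y z; rewrite !scale1r. Qed.

Lemma brDr x y z : br z (x + y) = br z x + br z y.
Proof. by case: Hlie => _ linr _ _; have := linr 1 x y z; rewrite !scale1r. Qed.

Lemma br0r z : br z 0 = 0.
Proof.
by case: Hlie => _ linr _ _; have := linr (-1) z z z; rewrite !scaleN1r !addNr.
Qed.

Lemma brZr a x z : br z (a *: x) = a *: br z x.
Proof.
by case: Hlie => _ linr _ _; have := linr a x 0 z; rewrite !addr0 br0r addr0.
Qed.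

Lemma brNr x z : br z (- x) = - br z x.
Proof. by rewrite -scaleN1r brZr scaleN1r. Qed.

Lemma brNC x y : br y x = - br x y.
Proof.
case: Hlie => _ _ alt _.
have /eqP := alt (x + y); rewrite brDl !brDr !alt add0r addr0 addr_eq0.
by move/eqP->; rewrite opprK.
Qed.

Lemma br_sumr (I : Type) (s : seq I) (f : I -> 'rV[F]_d) x :
  br x (\sum_(i <- s) f i) = \sum_(i <- s) br x (f i).
Proof. exact: (big_morph (br x) (fun y z => brDr y z x) (br0r x)). Qed.

End LieBracket.

Section InvariantForm.
Variables (F : fieldType) (d : nat) (br : 'rV[F]_d -> 'rV[F]_d -> 'rV[F]_d).
Variable B : 'rV[F]_d -> 'rV[F]_d -> F.
Hypothesis HB : inv_sym_bilinear br B.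

Lemma BC x y : B x y = B y x.
Proof. by case: HB. Qed.

Lemma B_br x y z : B (br x y) z = B x (br y z).
Proof. by case: HB. Qed.

Lemma BDl x y z : B (x + y) z = B x z + B y z.
Proof. by case: HB => linl _ _; have := linl 1 x y z; rewrite scale1r mul1r. Qed.

Lemma BDr x y z : B z (x + y) = B z x + B z y.
Proof. by rewrite !(BC z) BDl. Qed.

Lemma B0l z : B 0 z = 0.
Proof.
by case: HB => linl _ _; have := linl (-1) z z z; rewrite scaleN1r addNr mulN1r addNr.
Qed.

Lemma B0r z : B z 0 = 0.
Proof. by rewrite BC B0l. Qed.

Lemma BZl a x z : B (a *: x) z = a * B x z.
Proof. by case: HB => linl _ _; have := linl a x 0 z; rewrite addr0 B0l addr0. Qed.

Lemma BZr a x z : B z (a *: x) = a * B z x.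
Proof. by rewrite !(BC z) BZl. Qed.

Lemma BNr x z : B z (- x) = - B z x.
Proof. by rewrite -scaleN1r BZr mulN1r. Qed.

Lemma B_suml (I : Type) (s : seq I) (f : I -> 'rV[F]_d) x :
  B (\sum_(i <- s) f i) x = \sum_(i <- s) B (f i) x.
Proof. exact: (big_morph (B^~ x) (fun y z => BDl y z x) (B0l x)). Qed.

Lemma B_sumr (I : Type) (s : seq I) (f : I -> 'rV[F]_d) x :
  B x (\sum_(i <- s) f i) = \sum_(i <- s) B x (f i).
Proof. exact: (big_morph (B x) (fun y z => BDr y z x) (B0r x)). Qed.

End InvariantForm.

Section GradedPairing.
Variables (F : numFieldType) (d : nat) (br : 'rV[F]_d -> 'rV[F]_d -> 'rV[F]_d).
Variable B : 'rV[F]_d -> 'rV[F]_d -> F.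
Hypotheses (Hlie : is_lie_bracket br) (HB : inv_sym_bilinear br B).
Variable h : 'rV[F]_d.

Lemma in_grade_orthogonal (a b : int) x y :
  in_grade br h a x -> in_grade br h b y -> a + b != 0 -> B x y = 0.
Proof.
rewrite /in_grade => hx hy nab.
have ax : a%:~R * B x y = B h (br x y) by rewrite -(BZl HB) -hx (B_br HB).
have bx : b%:~R * B x y = - B h (br x y).
  by rewrite (BC HB) -(BZl HB) -hy (B_br HB) (brNC Hlie x y) (BNr HB).
have /eqP : (a + b)%:~R * B x y = 0 by rewrite intrD mulrDl ax bx addrN.
by rewrite mulf_eq0 intr_eq0 (negbTE nab) => /eqP.
Qed.

Lemma in_grade_br0 (b : int) u y :
  in_grade br h 0 u -> in_grade br h b y -> in_grade br h b (br u y).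
Proof.
rewrite /in_grade => hu hy; case: (Hlie) => _ _ _ jacobi.
have /eqP := jacobi h u y.
rewrite hu scale0r (br0r Hlie) addr0 (brNC Hlie h y) hy (brNr Hlie) (brZr Hlie).
by rewrite subr_eq0 => /eqP.
Qed.

Lemma in_filt_orthogonal_br0 (p q : int) x y u :
  in_filt br h p x -> in_filt br h q y -> in_grade br h 0 u -> p + q < 0 ->
  B x (br u y) = 0.
Proof.
move=> [s1 [f1 [s1_le f1_gr ->]]] [s2 [f2 [s2_le f2_gr ->]]] hu pq_lt0.
rewrite (B_suml HB); apply: big1_seq => a /andP[_ a_s1].
rewrite (br_sumr Hlie) (B_sumr HB); apply: big1_seq => b /andP[_ b_s2].
apply: (in_grade_orthogonal (f1_gr a) (in_grade_br0 hu (f2_gr b))).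
by have := allP s1_le a a_s1; have := allP s2_le b b_s2 => /= ? ?; lia.
Qed.

(* Only the degree-q component of y pairs with x, and h acts on it by q. *)
Lemma in_filt_pair_brh (p q : int) x y :
  in_filt br h p x -> in_filt br h q y -> p + q <= 0 ->
  B x (br h y) = B x (q%:~R *: y).
Proof.
move=> [s1 [f1 [s1_le f1_gr ->]]] [s2 [f2 [s2_le f2_gr ->]]] pq_le0.
rewrite scaler_sumr (br_sumr Hlie) !(B_suml HB); apply: eq_big_seq => a a_s1.
rewrite !(B_sumr HB); apply: eq_big_seq => b b_s2.
rewrite (f2_gr b) !(BZr HB); have [->//|nbq] := eqVneq b q.
rewrite (in_grade_orthogonal (f1_gr a) (f2_gr b)) ?mulr0 //.
by have := allP s1_le a a_s1; have := allP s2_le b b_s2 => /= ? ?; lia.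
Qed.

Section Connection.
Variables (k : nat) (w L' : int -> 'rV[F]_d).
Hypotheses (w_res : w (-1) = h) (w_reg : forall s : int, 0 <= s -> in_grade br h 0 (w s)).
Hypotheses (L'_low : forall p : int, p < - k%:Z -> L' p = 0)
           (L'_filt : forall p : int, in_filt br h p (L' p)).

Lemma pair_derivative_eq_pair_connection (p m : int) x :
  in_filt br h p x -> p + m < 0 ->
  B x ((m + 1)%:~R *: L' (m + 1)) =
  B x (cprod (-1) (- k%:Z) (fun s q => br (w s) (L' q)) m).
Proof.
move=> x_filt pm_lt0; rewrite /cprod; case: ifP => [m_ge | /negbT m_lt].
  rewrite big_ord_recl (BDr HB) (B_sumr HB) big1 ?addr0; last first.
    move=> i _; rewrite lift0.
    by apply: (in_filt_orthogonal_br0 x_filt (L'_filt _)); [apply: w_reg|]; lia.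
  have -> : m - -1 = m + 1 by lia.
  by rewrite w_res (in_filt_pair_brh x_filt (L'_filt _)) //; lia.
by rewrite L'_low ?scaler0 //; lia.
Qed.

End Connection.

End GradedPairing.

Theorem theorem2p2 (F : numClosedFieldType) (d : nat)
  (br : 'rV[F]_d -> 'rV[F]_d -> 'rV[F]_d)
  (Hlie : is_lie_bracket br) (Hss : semisimple_lie br)
  (h : 'rV[F]_d) (Hh : grading_element br h)
  (k : nat) (Hk : is_depth br h k)
  (B : 'rV[F]_d -> 'rV[F]_d -> F) (HB : inv_sym_bilinear br B)
  (w : int -> 'rV[F]_d)
  (Hw_low : forall s : int, s < -1 -> w s = 0)
  (Hw_res : w (-1) = h)
  (Hw_0 : forall s : int, 0 <= s -> in_grade br h 0 (w s))
  (L L' : int -> 'rV[F]_d)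
  (HL_low : forall p : int, p < - k%:Z -> L p = 0)
  (HL_filt : forall p : int, in_filt br h p (L p))
  (HL'_low : forall p : int, p < - k%:Z -> L' p = 0)
  (HL'_filt : forall p : int, in_filt br h p (L' p)) :
  forall n : int, n < 0 -> form_coef br B k L L' w n = 0.
Proof.
move=> n n_lt0; apply/eqP; rewrite /form_coef subr_eq0 /cprod.
case: ifP => // _; apply/eqP/eq_bigr => i _.
apply: (pair_derivative_eq_pair_connection Hlie HB Hw_res Hw_0 HL'_low HL'_filt).
  exact: HL_filt.
lia.
Qed.
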